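(* If a finite graph $G$ has a loop, then $H^i(G)=0$ for all $i$.
   Context: Graphs are finite; loops and multiple edges allowed. For $G=(V,E)$ and $s\subseteq E$, $[G:s]$ is the spanning subgraph with edge set $s$. With $1*1=1$, $1*x=x*1=x$, $x*x=0$: an enhanced state is $S=(s,c)$, $s\subseteq E$, $c$ assigning $1$ or $x$ to each component of $[G:s]$; $i(S)=|s|$, $j(S)=$ number of components colored $x$. $C^{i,j}(G)$ is free abelian on enhanced states with $i(S)=i,j(S)=j$; $C^i(G)=\bigoplus_jC^{i,j}(G)$. For an ordering of the edges, $d(S)=\sum_{e\in E\setminus s}(-1)^{n(e)}S_e$, $n(e)$ the number of edges of $s$ ordered before $e$; $S_e=(s\cup\{e\},c_e)$ where, if $e$ joins a component to itself, colors are unchanged, and if $e$ joins distinct components $E_1,E_2$ the merged component gets $c(E_1)*c(E_2)$ (and $S_e=0$ if this product is $0$). $H^i(G)$ is the $i$-th cohomology of $(C^\bullet(G),d)$. *)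

(* Chromatic graph cohomology (Helme-Guizon--Rong) over Z. *)
From HB Require Import structures.
From mathcomp Require Import all_boot all_order all_algebra.
Set Implicit Arguments. Unset Strict Implicit. Unset Printing Implicit Defensive.
Import GRing.Theory.

Section Chromatic.
(* A finite graph (loops and multiple edges allowed): vertex set V (a finType),
   edge set 'I_m, each edge e having endpoints src e and tgt e.
   The edge ordering used in the differential is the natural order on 'I_m. *)
Variables (V : finType) (m : nat) (src tgt : 'I_m -> V).

Definition sadj (s : {set 'I_m}) : rel V := fun u v =>
  [exists e in s, ((src e == u) && (tgt e == v)) || ((src e == v) && (tgt e == u))].

(* an enhanced state: edge subset s plus a colouring c of the components of
   [G:s], represented as a vertex colouring constant on components
   (true = x, false = 1) *)
Definition compat (p : {set 'I_m} * {ffun V -> bool}) : bool :=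
  [forall u, forall v, connect (sadj p.1) u v ==> (p.2 u == p.2 v)].

Definition state := {p : {set 'I_m} * {ffun V -> bool} | compat p}.

Definition edge_sign (s : {set 'I_m}) (e : 'I_m) : int :=
  ((-1) ^+ #|[set e' in s | (e' < e)%N]|)%R.

(* S_e (None encodes S_e = 0) *)
Definition raw_succ (p : {set 'I_m} * {ffun V -> bool}) (e : 'I_m)
    : option ({set 'I_m} * {ffun V -> bool}) :=
  let s := p.1 in let c := p.2 in
  if connect (sadj s) (src e) (tgt e) then Some (e |: s, c)
  else if c (src e) && c (tgt e) then None
  else Some (e |: s, [ffun v => if connect (sadj s) (src e) v || connect (sadj s) (tgt e) v
                               then c (src e) || c (tgt e) else c v]).

Definition chain := {ffun state -> int}.

Definition cdiff (f : chain) : chain :=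
  [ffun T : state => (\sum_(S : state) \sum_(e : 'I_m | e \notin (val S).1)
      (if raw_succ (val S) e == Some (val T) then edge_sign (val S).1 e * f S else 0))%R].

Definition in_degree (i : nat) (f : chain) : Prop :=
  forall S : state, f S != 0%R -> #|(val S).1| = i.

(* H^i(G) = 0: every cocycle in C^i is the coboundary of a chain in C^{i-1}
   (with C^{-1} = 0) *)
Definition cohom_vanishes (i : nat) : Prop :=
  forall f : chain, in_degree i f -> cdiff f = 0%R ->
    exists g : chain, (forall S : state, g S != 0%R -> (#|(val S).1|).+1 = i) /\ cdiff g = f.

Definition has_loop : Prop := exists e : 'I_m, src e = tgt e.
End Chromatic.

From mathcomp Require Import all_boot all_order all_algebra.
From Stdlib Require Import FunctionalExtensionality.
Set Implicit Arguments. Unset Strict Implicit. Unset Printing Implicit Defensive.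
Import GRing.Theory.
Local Open Scope ring_scope.

(* A loop l joins every vertex to itself, so adding or removing it never changes
   the components of a spanning subgraph: S |-> S + l is a bijection from the
   enhanced states without l onto those with l, and it is the l-component of d,
   up to the sign (-1)^{n(l)}.  Let h send a state containing l to
   (-1)^{n(l)} (S - l) and every other state to 0.  Since the signs of d
   anticommute in any two edges, dh + hd = id, so every cocycle f equals d(hf). *)

Lemma setU1_eq (T : finType) (a : T) (X Y : {set T}) :
  a \notin X -> a \notin Y -> (a |: X == a |: Y) = (X == Y).
Proof.
move=> aX aY; apply/eqP/eqP => [eXY | -> //].
by rewrite -(setU1K aX) eXY setU1K.
Qed.

Section EdgeSign.
Variable m : nat.
Implicit Types (s : {set 'I_m}) (a b : 'I_m).

Lemma edge_signU1 a s b : edge_sign (a |: s) b =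
  if (a < b)%N && (a \notin s) then - edge_sign s b else edge_sign s b.
Proof.
rewrite /edge_sign.
have -> : [set e in a |: s | (e < b)%N] =
    if (a < b)%N then a |: [set e in s | (e < b)%N] else [set e in s | (e < b)%N].
  by apply/setP => x; case: ifP => ab; rewrite !inE;
    case: (eqVneq x a) => [->|]; rewrite ?ab ?andbF.
case: ifP => //= ab; rewrite cardsU1 inE ab andbT.
by case: (a \in s); rewrite //= exprS mulN1r.
Qed.

Lemma edge_sign_sqr s b : edge_sign s b * edge_sign s b = 1.
Proof. by rewrite /edge_sign -expr2 sqrr_sign. Qed.

Lemma edge_sign_anticomm s a b : a \notin s -> b \notin s -> a != b ->
  edge_sign s a * edge_sign s b + edge_sign (a |: s) b * edge_sign (b |: s) a = 0.
Proof.
move=> aS bS ab; rewrite !edge_signU1 aS bS !andbT.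
case: (ltngtP a b) => [lt|lt|eq].
- by rewrite mulNr mulrC subrr.
- by rewrite mulrN mulrC subrr.
- by move: ab; rewrite (val_inj eq) eqxx.
Qed.
End EdgeSign.

Section ContractingHomotopy.
Variables (R : comPzRingType) (I : finType) (d h : I -> I -> R).
Hypothesis homotopy_id :
  forall S T, \sum_U h S U * d U T + \sum_U d S U * h U T = (S == T)%:R.

Lemma sum_mul_sumA (a b : I -> I -> R) (f : I -> R) T :
  \sum_S a S T * (\sum_U b U S * f U) = \sum_U (\sum_S b U S * a S T) * f U.
Proof.
under eq_bigr do rewrite big_distrr; rewrite exchange_big /=.
by apply: eq_bigr => U _; rewrite big_distrl; apply: eq_bigr => S _;
  rewrite mulrA [a S T * _]mulrC.
Qed.

Lemma homotopy_cocycle_coboundary (f : I -> R) :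
  (forall T, \sum_S d S T * f S = 0) ->
  forall T, \sum_S d S T * (\sum_U h U S * f U) = f T.
Proof.
move=> cocycle T.
have hd : \sum_S h S T * (\sum_U d U S * f U) = 0.
  by rewrite big1 // => S _; rewrite cocycle mulr0.
rewrite -[LHS]addr0 -[X in _ + X]hd !sum_mul_sumA -big_split /=.
under eq_bigr do rewrite -mulrDl homotopy_id.
by rewrite (bigD1 T) //= big1 ?addr0 ?eqxx ?mul1r // => U /negbTE ->; rewrite mul0r.
Qed.
End ContractingHomotopy.

Section LoopContraction.
Variables (V : finType) (m : nat) (src tgt : 'I_m -> V) (l : 'I_m).
Hypothesis loop : src l = tgt l.

Local Notation sadj := (sadj src tgt).
Local Notation raw_succ := (raw_succ src tgt).
Local Notation state := (state src tgt).
Implicit Types (s t : {set 'I_m}) (c : {ffun V -> bool}) (S T U : state).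

Lemma raw_succ_set p e q : raw_succ p e = Some q -> q.1 = e |: p.1.
Proof. by rewrite /raw_succ; case: ifP => _; [|case: ifP => _] => // -[<-]. Qed.

Lemma connect_sadjD1 s : connect (sadj (s :\ l)) = connect (sadj s).
Proof.
apply: functional_extensionality => x; apply: functional_extensionality => y.
apply/idP/idP; apply: connect_sub => u v /existsP [e /andP [es uev]].
  by apply: connect1; apply/existsP; exists e; move: es; rewrite !inE => /andP [_ ->].
case: (eqVneq e l) => [el | ne].
  by move: uev; rewrite el -loop => /orP [] /andP [/eqP <- /eqP <-].
by apply: connect1; apply/existsP; exists e; rewrite !inE ne es.
Qed.

Lemma connect_sadjU1 s : connect (sadj (l |: s)) = connect (sadj s).
Proof. by rewrite -connect_sadjD1 -[RHS]connect_sadjD1 setDUl setDv set0U. Qed.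

Lemma raw_succ_loop p : raw_succ p l = Some (l |: p.1, p.2).
Proof. by rewrite /raw_succ loop connect0. Qed.

Lemma raw_succD1 s c e :
  raw_succ (s, c) e = omap (fun q => (e |: s, q.2)) (raw_succ (s :\ l, c) e).
Proof. by rewrite /raw_succ /= connect_sadjD1; case: ifP => _ //; case: ifP. Qed.

Lemma raw_succ_eq_addl s c e t d : l \in s -> l \notin t -> e != l ->
  (raw_succ (s, c) e == Some (l |: t, d)) = (raw_succ (s :\ l, c) e == Some (t, d)).
Proof.
move=> ls lt el; rewrite raw_succD1.
case E: (raw_succ (s :\ l, c) e) => [[q c'] |] //=.
have {E} -> : q = e |: (s :\ l) by apply: raw_succ_set E.
change ((e |: s == l |: t) && (c' == d) = (e |: (s :\ l) == t) && (c' == d)).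
rewrite -[in e |: s](setD1K ls) setUCA setU1_eq //.
by rewrite !inE eqxx andFb orbF eq_sym.
Qed.

Lemma compat_setU1 p : compat src tgt p -> compat src tgt (l |: p.1, p.2).
Proof. by rewrite /compat /= connect_sadjU1. Qed.

Lemma compat_setD1 p : compat src tgt p -> compat src tgt (p.1 :\ l, p.2).
Proof. by rewrite /compat /= connect_sadjD1. Qed.

Definition add_loop S : state :=
  exist _ (l |: (val S).1, (val S).2) (compat_setU1 (valP S)).

Definition del_loop S : state :=
  exist _ ((val S).1 :\ l, (val S).2) (compat_setD1 (valP S)).

Lemma add_del_loop S : l \in (val S).1 -> add_loop (del_loop S) = S.
Proof. by move=> lS; apply: val_inj; rewrite /= setD1K //; case: (val S). Qed.

Lemma del_add_loop S : l \notin (val S).1 -> del_loop (add_loop S) = S.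
Proof. by move=> lS; apply: val_inj; rewrite /= setU1K //; case: (val S). Qed.

Lemma add_loop_eq S T : l \notin (val S).1 -> l \notin (val T).1 ->
  (add_loop S == add_loop T) = (S == T).
Proof.
by move=> lS lT; apply/eqP/eqP => [eST | -> //];
  rewrite -(del_add_loop lS) eST del_add_loop.
Qed.

Definition dcoef S T : int := \sum_(e | e \notin (val S).1)
  (if raw_succ (val S) e == Some (val T) then edge_sign (val S).1 e else 0).

Definition hcoef S T : int :=
  if (l \notin (val T).1) && (S == add_loop T) then edge_sign (val T).1 l else 0.

Lemma cdiffE (f : chain src tgt) T : cdiff f T = \sum_S dcoef S T * f S.
Proof.
rewrite ffunE; apply: eq_bigr => S _; rewrite big_distrl /=.
by apply: eq_bigr => e _; case: ifP; rewrite ?mul0r.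
Qed.

Lemma hcoef_dcoef S T : \sum_U hcoef S U * dcoef U T =
  if l \in (val S).1 then edge_sign ((val S).1 :\ l) l * dcoef (del_loop S) T else 0.
Proof.
case: ifP => lS.
  rewrite (bigD1 (del_loop S)) //= big1 ?addr0 => [|U ne].
    by rewrite /hcoef /= setD11 add_del_loop ?eqxx.
  rewrite /hcoef; case: andP => [[lU /eqP eS] | _]; last by rewrite mul0r.
  by move: ne; rewrite eS del_add_loop ?eqxx.
apply: big1 => U _; rewrite /hcoef.
case: andP => [[_ /eqP eS] | _]; last by rewrite mul0r.
by move: lS; rewrite eS /= setU11.
Qed.

Lemma dcoef_hcoef S T : \sum_U dcoef S U * hcoef U T =
  if l \notin (val T).1 then dcoef S (add_loop T) * edge_sign (val T).1 l else 0.
Proof.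
case: ifP => lT; last by apply: big1 => U _; rewrite /hcoef lT mulr0.
rewrite (bigD1 (add_loop T)) //= big1 ?addr0 => [|U ne]; first by rewrite /hcoef lT eqxx.
by rewrite /hcoef (negbTE ne) andbF mulr0.
Qed.

Lemma dcoef_del_loop S T : l \in (val S).1 -> l \in (val T).1 ->
  dcoef (del_loop S) T = if S == T then edge_sign ((val S).1 :\ l) l else 0.
Proof.
move=> lS lT; rewrite /dcoef (bigD1 l) /= ?setD11 // big1 ?addr0.
  by rewrite raw_succ_loop setD1K.
move=> e /andP [_ el]; case: eqP => // /raw_succ_set /= eT.
by move: lT; rewrite eT !inE eq_sym (negbTE el) eqxx.
Qed.

Lemma dcoef_add_loop S T : l \notin (val S).1 -> l \notin (val T).1 ->
  dcoef S (add_loop T) = if S == T then edge_sign (val S).1 l else 0.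
Proof.
move=> lS lT; rewrite /dcoef (bigD1 l) //= big1 ?addr0.
  have -> : raw_succ (val S) l == Some (val (add_loop T)) = (add_loop S == add_loop T).
    by rewrite raw_succ_loop.
  by rewrite add_loop_eq.
move=> e /andP [_ el]; case: eqP => // /raw_succ_set /= /setP /(_ l).
by rewrite !inE eqxx eq_sym (negbTE el) (negbTE lS).
Qed.

Lemma dcoef_loop_cancel S T : l \in (val S).1 -> l \notin (val T).1 ->
  edge_sign ((val S).1 :\ l) l * dcoef (del_loop S) T
  + dcoef S (add_loop T) * edge_sign (val T).1 l = 0.
Proof.
case: S T => [[s c] pS] [[t d] pT] /= ls lt.
rewrite /dcoef /= (bigD1 l) /= ?setD11 // raw_succ_loop /= setD1K //.
have -> : (Some (s, c) == Some (t, d)) = false.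
  by apply/eqP => -[st _]; move: lt; rewrite -st ls.
rewrite add0r (eq_bigl (fun e => e \notin s)) => [|e]; last first.
  by rewrite !inE; case: (eqVneq e l) => [->|] /=; rewrite ?ls ?andbT.
rewrite big_distrr big_distrl -big_split /=; apply: big1 => e es.
have el : e != l by apply: contraNneq es => ->.
rewrite raw_succ_eq_addl //; case: eqP => [E | _]; last by rewrite mulr0 mul0r addr0.
have /= -> := raw_succ_set E.
have esl : e \notin s :\ l by rewrite !inE (negbTE es) andbF.
by rewrite -[in edge_sign s e](setD1K ls) edge_sign_anticomm ?setD11 // eq_sym.
Qed.

Lemma homotopy_identity S T :
  \sum_U hcoef S U * dcoef U T + \sum_U dcoef S U * hcoef U T = (S == T)%:R.
Proof.
rewrite hcoef_dcoef dcoef_hcoef.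
case: (boolP (l \in (val S).1)) => lS; case: (boolP (l \in (val T).1)) => lT /=.
- by rewrite addr0 dcoef_del_loop //; case: ifP; rewrite ?mulr0 ?edge_sign_sqr.
- by rewrite dcoef_loop_cancel //; case: eqP => // eST; move: lT; rewrite -eST lS.
- by rewrite add0r; case: eqP => // eST; move: lS; rewrite eST lT.
- by rewrite add0r dcoef_add_loop //; case: ifP => [/eqP -> | _];
    rewrite ?mul0r ?edge_sign_sqr.
Qed.

Lemma hcoef_card S T : hcoef S T != 0 -> #|(val S).1| = (#|(val T).1|).+1.
Proof.
by rewrite /hcoef; case: andP => [[lT /eqP ->] _ | _]; rewrite ?eqxx // cardsU1 lT.
Qed.

Lemma loop_cohom_vanishes i : cohom_vanishes src tgt i.
Proof.
move=> f deg_f cocycle; exists [ffun T => \sum_S hcoef S T * f S]; split.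
  move=> T; rewrite ffunE.
  case: (pickP (fun S => hcoef S T * f S != 0)) => [S | zero]; last first.
    by rewrite big1 ?eqxx // => S _; apply/eqP/negbFE/zero.
  by rewrite mulf_eq0 negb_or => /andP [/hcoef_card <- /deg_f].
apply/ffunP => T; rewrite cdiffE; under eq_bigr do rewrite ffunE.
apply: (homotopy_cocycle_coboundary homotopy_identity) => U.
by rewrite -cdiffE cocycle ffunE.
Qed.

End LoopContraction.

Unset Implicit Arguments.

Theorem mainTheorem6 (V : finType) (m : nat) (src tgt : 'I_m -> V) :
  has_loop src tgt -> forall i : nat, cohom_vanishes src tgt i.
Proof. by move=> [l loop] i; apply: loop_cohom_vanishes loop i. Qed.
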